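(* Let $\mu:\mathbb{N}\to\mathbb{R}$ with increments $\gamma(n)=\mu(n+1)-\mu(n)$ satisfying $\gamma(n)\ge0$ and $\gamma(n+1)\le\gamma(n)$ for all $n\in\mathbb{N}$. Let $T,N,h$ be integers with $N\ge2$, $N\le T-1$ and $1\le h\le\lfloor N/2\rfloor$, and define $$\bar\mu=\frac1h\sum_{l=N-h+1}^{N}\mu(l).$$ Then $\bar\mu\le\mu(T)$ and $$\mu(T)-\bar\mu\le\frac12(2T-2N+h-1)\,\gamma(N-h+1).$$
   Context: In the paper $\mu$ is the expected-reward function of an arm (indexed by number of pulls), $N$ is the number of pulls of the arm before some round $t\le T$, and $h$ is the window width. *)

From Stdlib Require Import Reals Lra Lia.
Open Scope R_scope.

Definition incr (mu : nat -> R) (n : nat) : R := mu (S n) - mu n.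

(* mubar = (1/h) * sum_{l = N-h+1}^{N} mu(l) ;  requires h >= 1 *)
Definition mubar (mu : nat -> R) (N h : nat) : R :=
  (/ INR h) * sum_f_R0 (fun k => mu (N - h + 1 + k)%nat) (h - 1).

From Stdlib Require Import Reals Lra Lia.
Open Scope R_scope.

(* Since the increments are nonnegative, mu is nondecreasing and every term of
   the window average is at most mu T.  Since they are nonincreasing, mu is
   concave: for every n in the window [a, N] with a = N - h + 1,
   mu T - mu n <= (T - n) * incr mu a.  Averaging this affine bound over the
   window, where the mean of n is N - (h - 1) / 2, gives the second estimate. *)

Lemma sum_f_R0_INR (m : nat) : sum_f_R0 INR m = INR m * INR (S m) / 2.
Proof.
  induction m as [|m IH]; [simpl; lra|].
  rewrite tech5, IH, !S_INR; lra.
Qed.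

Section WindowMean.

Variables (N h : nat).
Hypothesis h_pos : (1 <= h)%nat.

Let INR_h_pos : 0 < INR h.
Proof. apply lt_0_INR; lia. Qed.

Let INR_window_length : INR (S (h - 1)) = INR h.
Proof. f_equal; lia. Qed.

Lemma mubar_le_compat (f g : nat -> R) :
  (forall k, (k <= h - 1)%nat -> f (N - h + 1 + k)%nat <= g (N - h + 1 + k)%nat) ->
  mubar f N h <= mubar g N h.
Proof.
  intros Hfg; unfold mubar.
  apply Rmult_le_compat_l.
  - apply Rlt_le, Rinv_0_lt_compat, INR_h_pos.
  - apply sum_Rle, Hfg.
Qed.

Lemma mubar_const (c : R) : mubar (fun _ => c) N h = c.
Proof.
  unfold mubar; rewrite sum_cte, INR_window_length.
  field; apply Rgt_not_eq, INR_h_pos.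
Qed.

Lemma mubar_affine (alpha beta : R) (f : nat -> R) :
  mubar (fun n => alpha + beta * f n) N h = alpha + beta * mubar f N h.
Proof.
  unfold mubar; rewrite plus_sum, sum_cte, INR_window_length.
  rewrite (sum_eq _ (fun k => f (N - h + 1 + k)%nat * beta))
    by (intros; apply Rmult_comm).
  rewrite <- scal_sum.
  field; apply Rgt_not_eq, INR_h_pos.
Qed.

Lemma mubar_INR : (h <= N)%nat -> mubar INR N h = INR N - (INR h - 1) / 2.
Proof.
  intros h_le_N; unfold mubar.
  rewrite (sum_eq _ (fun k => INR (N - h + 1) + INR k)) by (intros; apply plus_INR).
  rewrite plus_sum, sum_cte, sum_f_R0_INR, INR_window_length.
  rewrite plus_INR, !minus_INR by lia.
  change (INR 1) with 1.
  field; apply Rgt_not_eq, INR_h_pos.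
Qed.

End WindowMean.

Section Increments.

Variable mu : nat -> R.

Lemma incr_ge0_le (incr_ge0 : forall n, 0 <= incr mu n) (m n : nat) :
  (m <= n)%nat -> mu m <= mu n.
Proof.
  induction 1 as [|n _ IH]; [lra|].
  specialize (incr_ge0 n); unfold incr in incr_ge0; lra.
Qed.

Hypothesis incr_nonincreasing : forall n, incr mu (S n) <= incr mu n.

Lemma incr_antitone (m n : nat) : (m <= n)%nat -> incr mu n <= incr mu m.
Proof.
  induction 1 as [|n _ IH]; [lra|].
  specialize (incr_nonincreasing n); lra.
Qed.

Lemma sub_le_incr_mul (a m n : nat) :
  (a <= m)%nat -> (m <= n)%nat -> mu n - mu m <= (INR n - INR m) * incr mu a.
Proof.
  intros a_le_m; induction 1 as [|n m_le_n IH]; [lra|].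
  assert (incr_n : incr mu n <= incr mu a) by (apply incr_antitone; lia).
  assert (step : mu (S n) = mu n + incr mu n) by (unfold incr; ring).
  rewrite step, S_INR; nra.
Qed.

End Increments.

Theorem lemma7 (mu : nat -> R) (T N h : nat)
  (Hgpos : forall n : nat, 0 <= incr mu n)
  (Hgdec : forall n : nat, incr mu (S n) <= incr mu n)
  (HN2 : (2 <= N)%nat) (HNT : (N + 1 <= T)%nat)
  (Hh1 : (1 <= h)%nat) (HhN : (h <= N / 2)%nat) :
  mubar mu N h <= mu T /\
  mu T - mubar mu N h <=
    / 2 * (2 * INR T - 2 * INR N + INR h - 1) * incr mu (N - h + 1)%nat.
Proof.
  assert (h_le_N : (h <= N)%nat) by (pose proof (Nat.Div0.mul_div_le N 2); lia).
  set (a := (N - h + 1)%nat).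
  split.
  - apply Rle_trans with (mubar (fun _ => mu T) N h).
    + apply mubar_le_compat; [exact Hh1|].
      intros k k_le; apply incr_ge0_le; [exact Hgpos | lia].
    + rewrite mubar_const by exact Hh1; lra.
  - set (g := incr mu a).
    assert (lower : mubar (fun n => (mu T - INR T * g) + g * INR n) N h <= mubar mu N h).
    { apply mubar_le_compat; [exact Hh1|].
      intros k k_le.
      assert (chord : mu T - mu (a + k)%nat <= (INR T - INR (a + k)) * g)
        by (apply sub_le_incr_mul; [exact Hgdec | lia | lia]).
      change (N - h + 1 + k)%nat with (a + k)%nat; nra. }
    rewrite mubar_affine, mubar_INR in lower by lia.
    lra.
Qed.
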